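(* A 5-ring is $4K_1$-free if and only if it is $2P_3$-free.
   Context: Graphs are finite and simple. $4K_1$ is the edgeless graph on four vertices; $2P_3$ is the disjoint union of two 3-vertex paths; $H$-free means no induced subgraph isomorphic to $H$. A 5-ring is a graph $R$ whose vertex set can be partitioned into nonempty sets $X_0,\dots,X_4$ (indices in $\mathbb{Z}_5$) such that for each $i$, $X_i$ can be ordered as $u^i_1,\dots,u^i_{|X_i|}$ so that $X_i\subseteq N_R[u^i_{|X_i|}]\subseteq\dots\subseteq N_R[u^i_1]=X_{i-1}\cup X_i\cup X_{i+1}$, where $N_R[v]$ denotes the closed neighbourhood of $v$. *)

From mathcomp Require Import all_boot.
Set Implicit Arguments. Unset Strict Implicit. Unset Printing Implicit Defensive.

(* A finite simple graph: vertex type T : finType, adjacency e : rel T,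
   assumed symmetric and irreflexive (hypotheses of the theorem). *)

Definition cnbhd (T : finType) (e : rel T) (v : T) : {set T} :=
  [set x | (x == v) || e v x].

Definition induced_sub (T : finType) (e : rel T) (k : nat) (h : rel 'I_k) : Prop :=
  exists f : 'I_k -> T, injective f /\ forall a b : 'I_k, e (f a) (f b) = h a b.

Definition H_free (T : finType) (e : rel T) (k : nat) (h : rel 'I_k) : Prop :=
  ~ induced_sub e h.

Definition rel_4K1 : rel 'I_4 := fun _ _ => false.

(* 2P_3: paths 0-1-2 and 3-4-5 *)
Definition rel_2P3 : rel 'I_6 := fun a b =>
  let x := nat_of_ord a in let y := nat_of_ord b in
  [|| (x == 0) && (y == 1), (x == 1) && (y == 0),
      (x == 1) && (y == 2), (x == 2) && (y == 1),
      (x == 3) && (y == 4), (x == 4) && (y == 3),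
      (x == 4) && (y == 5) | (x == 5) && (y == 4)].

(* 5-ring: partition map p : T -> 'I_5 (X_i = p^-1(i), indices mod 5);
   each X_i is nonempty and can be listed as s = [u_1; ...; u_m] with
   X_i ⊆ N[u_m] ⊆ ... ⊆ N[u_1] = X_{i-1} ∪ X_i ∪ X_{i+1}. *)
Definition five_ring (T : finType) (e : rel T) : Prop :=
  exists p : T -> 'I_5,
    forall i : 'I_5,
      let X (j : nat) : {set T} := [set x | nat_of_ord (p x) == j %% 5] in
      (exists x, p x == i) /\
      exists (u1 : T) (s' : seq T),
        [/\ uniq (u1 :: s'),
            (forall x, (x \in u1 :: s') = (p x == i)),
            sorted (fun u v => cnbhd e v \subset cnbhd e u) (u1 :: s'),
            X i \subset cnbhd e (last u1 s') &
            cnbhd e u1 = X (i + 4) :|: X i :|: X (i + 1)].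

From mathcomp Require Import all_boot ssralg zmodp.

Set Implicit Arguments.
Unset Strict Implicit.
Unset Printing Implicit Defensive.

Import GRing.Theory.

(* In any graph the four path ends of 2P3 form a 4K1, so 4K1-freeness implies
   2P3-freeness. Conversely, in a 5-ring every X_i is a clique, edges only join
   parts at cyclic distance at most one, and the first vertex u_1 of X_i is
   adjacent to all of X_{i-1} ∪ X_i ∪ X_{i+1}. A stable set a_1, ..., a_4 thus
   meets four distinct parts, which up to rotation are X_{j+1}, ..., X_{j+4}
   with a_m in X_{j+m}. If u and v are the first vertices of X_{j+1} and
   X_{j+4}, the paths a_1 u a_2 and a_3 v a_4 induce a 2P3. *)

Lemma induced_sub_trans (T : finType) (e : rel T) (k1 k2 : nat)
    (h1 : rel 'I_k1) (h2 : rel 'I_k2) :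
  induced_sub h2 h1 -> induced_sub e h2 -> induced_sub e h1.
Proof.
move=> [f [f_inj f_adj]] [g [g_inj g_adj]].
exists (g \o f); split=> [|a b /=]; first exact: inj_comp.
by rewrite g_adj f_adj.
Qed.

Lemma induced_4K1_2P3 : induced_sub rel_2P3 rel_4K1.
Proof.
have lt6 (k : 'I_4) : nth 0 [:: 0; 2; 3; 5] k < 6 by case: k => [[|[|[|[|?]]]] ?].
exists (fun k : 'I_4 => inord (nth 0 [:: 0; 2; 3; 5] k)); split=> [a b|a b].
  by move/(congr1 val)/eqP; rewrite /= !inordK // nth_uniq // => /eqP/val_inj.
by rewrite /rel_2P3 !inordK //; case: a b => [[|[|[|[|?]]]] ?] [[|[|[|[|?]]]] ?].
Qed.

Section InducedTwoPaths.

Variables (T : finType) (e : rel T).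
Hypotheses (e_sym : symmetric e) (e_irr : irreflexive e).

Lemma two_paths_induced_2P3 (x0 x1 x2 y0 y1 y2 : T) :
  e x0 x1 -> e x1 x2 -> e y0 y1 -> e y1 y2 -> ~~ e x0 x2 -> ~~ e y0 y2 ->
  {in [:: x0; x1; x2] & [:: y0; y1; y2], forall x y, ~~ e x y} ->
  x0 != x2 -> y0 != y2 -> induced_sub e rel_2P3.
Proof.
move=> ex01 ex12 ey01 ey12 nx02 ny02 ncross x02 y02.
pose g (a : 'I_6) := nth x0 [:: x0; x1; x2; y0; y1; y2] a.
have g_adj a b : e (g a) (g b) = rel_2P3 a b.
{ case: a b => [[|[|[|[|[|[|?]]]]]] ?] [[|[|[|[|[|[|?]]]]]] ?] //=.
  all: rewrite /rel_2P3 /= ?e_irr //.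
  all: first [ by [] | by rewrite e_sym | by apply/negbTE
             | by rewrite e_sym; apply/negbTE
             | by apply/negbTE/ncross; rewrite !inE eqxx ?orbT
             | by rewrite e_sym; apply/negbTE/ncross; rewrite !inE eqxx ?orbT ]. }
exists g; split=> // a b gab.
(* Distinct vertices of 2P3 with the same neighbours are the ends of one path. *)
have rows c : rel_2P3 a c = rel_2P3 b c by rewrite -!g_adj gab.
case: a b gab rows => [[|[|[|[|[|[|?]]]]]] ?] [[|[|[|[|[|[|?]]]]]] ?] //= gab rows.
all: first [ exact: val_inj
           | by move: gab x02; rewrite /g /= => ->; rewrite eqxx
           | by move: gab y02; rewrite /g /= => ->; rewrite eqxx
           | by have := rows (@Ordinal 6 0 isT) | by have := rows (@Ordinal 6 1 isT)
           | by have := rows (@Ordinal 6 3 isT) | by have := rows (@Ordinal 6 4 isT) ].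
Qed.

End InducedTwoPaths.

Lemma sorted_head_last_mem (T : eqType) (r : rel T) (x y : T) (s : seq T) :
  transitive r -> reflexive r -> sorted r (x :: s) -> y \in x :: s ->
  r x y /\ r y (last x s).
Proof.
move=> r_trans r_refl s_sorted y_in.
have r_nth := sorted_leq_nth r_trans r_refl y s_sorted.
have lt_y : index y (x :: s) < size (x :: s) by rewrite index_mem.
split; first by have := r_nth 0 (index y (x :: s)); rewrite nth_index //; apply.
have -> : last x s = nth y (x :: s) (size s) by rewrite (nth_last y (x :: s)).
have := r_nth (index y (x :: s)) (size s); rewrite nth_index //; apply=> //.
by rewrite inE /=.
Qed.

Lemma injective_codom_but_one (aT T : finType) (f : aT -> T) :
  injective f -> #|T| = #|aT|.+1 -> exists j, forall i, i != j -> exists a, f a = i.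
Proof.
move=> f_inj card_T.
have /card1P [j compl_j] : #|[predC codom f]| == 1.
  by rewrite -(eqn_add2l #|codom f|) cardC card_codom // card_T addn1.
exists j => i /negbTE i_j.
have /codomP [a ->] : i \in codom f by move: (compl_j i); rewrite !inE i_j => /negbFE.
by exists a.
Qed.

Local Open Scope ring_scope.

Definition c5_near (i j : 'I_5) : bool := (j == i - 1) || (j == i) || (j == i + 1).

Lemma c5_nearDl (k i j : 'I_5) : c5_near (k + i) (k + j) = c5_near i j.
Proof. by rewrite /c5_near -!addrA !(inj_eq (addrI k)). Qed.

Lemma c5_near_modE (i j : 'I_5) :
  (val j == ((i + 4) %% 5)%N) || (val j == (i %% 5)%N) || (val j == ((i + 1) %% 5)%N)
  = c5_near i j.
Proof. by case: i j => [[|[|[|[|[|?]]]]] ?] [[|[|[|[|[|?]]]]] ?]. Qed.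

Lemma five_ring_partition (T : finType) (e : rel T) : five_ring e ->
  exists p : T -> 'I_5,
  [/\ forall x y, p x = p y -> x != y -> e x y,
      forall x y, e x y -> c5_near (p x) (p y) &
      forall i, exists2 u, p u = i & forall y, c5_near i (p y) -> y != u -> e u y].
Proof.
move=> [p ring]; exists p.
have chain x : exists u, [/\ p u = p x,
    cnbhd e u = [set y | c5_near (p x) (p y)],
    cnbhd e x \subset cnbhd e u &
    [set y | p y == p x] \subset cnbhd e x].
{ have [_ [u [s [_ mem_s sorted_s last_s nbhd_u]]]] := ring (p x).
  have x_in : x \in u :: s by rewrite mem_s.
  have sub_trans : transitive (fun a b : T => cnbhd e b \subset cnbhd e a).
    by move=> b a c ab bc; apply: subset_trans bc ab.
  have [u_x x_last] := sorted_head_last_mem sub_trans (fun _ => subxx _) sorted_s x_in.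
  exists u; split=> //.
  - by apply/eqP; rewrite -mem_s mem_head.
  - by rewrite nbhd_u; apply/setP => y; rewrite !inE c5_near_modE.
  - apply: subset_trans x_last; apply: subset_trans last_s.
    by apply/subsetP => y; rewrite !inE modn_small. }
split.
- move=> x y pxy xy; have [u [_ _ _ part_x]] := chain x.
  by have := subsetP part_x y; rewrite !inE pxy eqxx eq_sym (negbTE xy); apply.
- move=> x y xy; have [u [_ nbhd_u x_u _]] := chain x.
  by have := subsetP x_u y; rewrite nbhd_u !inE xy orbT; apply.
- move=> i; have [[x /eqP px] _] := ring i.
  have [u [pu nbhd_u _ _]] := chain x.
  exists u => [|y near_y /negbTE yu]; first by rewrite pu.
  by have := nbhd_u; rewrite px => /setP/(_ y); rewrite !inE near_y yu.
Qed.

Section FiveRingStableSets.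

Variables (T : finType) (e : rel T) (p : T -> 'I_5).
Hypotheses (e_sym : symmetric e) (e_irr : irreflexive e).
Hypothesis part_clique : forall x y, p x = p y -> x != y -> e x y.
Hypothesis edge_near : forall x y, e x y -> c5_near (p x) (p y).
Hypothesis part_top :
  forall i, exists2 u, p u = i & forall y, c5_near i (p y) -> y != u -> e u y.

Lemma five_ring_induced_2P3 : induced_sub e rel_4K1 -> induced_sub e rel_2P3.
Proof.
move=> [f [f_inj f_adj]].
have stable a b : e (f a) (f b) = false by rewrite f_adj.
have far x y : ~~ c5_near (p x) (p y) -> e x y = false.
  by apply: contraNF; apply: edge_near.
have part_neq x y : p x != p y -> x != y by apply: contraNneq => ->.
have [j hit] : exists j, forall i, i != j -> exists k, p (f k) = i.
  apply: (injective_codom_but_one (f := p \o f)); last by rewrite !card_ord.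
  move=> a b /= pab; apply: f_inj; apply/eqP.
  by apply: contraFT (stable a b); apply: part_clique.
have shift_neq m : m != 0 -> j + m != j by rewrite -{2}(addr0 j) (inj_eq (addrI j)).
have [k1 pk1] := hit _ (shift_neq 1 isT).
have [k2 pk2] := hit _ (shift_neq 2 isT).
have [k3 pk3] := hit _ (shift_neq 3 isT).
have [k4 pk4] := hit _ (shift_neq 4 isT).
have [h1 ph1 top1] := part_top (j + 1).
have [h4 ph4 top4] := part_top (j + 4).
have h1_a2 : e h1 (f k2).
  apply: top1; first by rewrite pk2 c5_nearDl.
  by apply: part_neq; rewrite pk2 ph1 (inj_eq (addrI j)).
have a3_h4 : e (f k3) h4.
  rewrite e_sym; apply: top4; first by rewrite pk3 c5_nearDl.
  by apply: part_neq; rewrite pk3 ph4 (inj_eq (addrI j)).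
have a1_h1 : e (f k1) h1.
  apply: part_clique; first by rewrite pk1 ph1.
  by apply: contraTneq h1_a2 => <-; rewrite stable.
have h4_a4 : e h4 (f k4).
  apply: part_clique; first by rewrite pk4 ph4.
  by apply: contraTneq a3_h4 => ->; rewrite stable.
have cross : {in [:: f k1; h1; f k2] & [:: f k3; h4; f k4], forall x y, ~~ e x y}.
{ move=> x y; rewrite !inE => /or3P[]/eqP-> /or3P[]/eqP->; rewrite ?stable //.
  all: by apply/negbT/far; rewrite ?pk1 ?pk2 ?pk3 ?pk4 ?ph1 ?ph4 c5_nearDl. }
apply: (two_paths_induced_2P3 e_sym e_irr a1_h1 h1_a2 a3_h4 h4_a4 _ _ cross).
all: rewrite ?stable //; apply: part_neq.
all: by rewrite ?pk1 ?pk2 ?pk3 ?pk4 (inj_eq (addrI j)).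
Qed.

End FiveRingStableSets.

Theorem proposition6p5 (T : finType) (e : rel T) :
  symmetric e -> irreflexive e -> five_ring e ->
  (H_free e rel_4K1 <-> H_free e rel_2P3).
Proof.
move=> e_sym e_irr /five_ring_partition [p [part_clique edge_near part_top]].
split=> [no_4K1 has_2P3 | no_2P3 has_4K1].
- exact: no_4K1 (induced_sub_trans induced_4K1_2P3 has_2P3).
- exact: no_2P3 (five_ring_induced_2P3 e_sym e_irr part_clique edge_near part_top has_4K1).
Qed.
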